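(* Let $k\ge 3$ and $\ell\ge 1$ be integers. For all integers $n$ with $$n\ge 2\frac{(\ell(k-1)+k)^4-1}{(\ell+1)(k-1)}-1,$$ we have $px_{k,\ell}(K_n)=2$.
   Context: All graphs are finite, simple and undirected. An edge-coloring of a graph may assign the same color to adjacent edges. A tree $T$ in an edge-colored graph is a proper tree if no two adjacent edges of $T$ receive the same color. For $S\subseteq V(G)$ with $|S|\ge 2$, an $S$-tree is a tree in $G$ containing all vertices of $S$. $S$-trees $T_1,\dots,T_\ell$ are internally disjoint if $E(T_i)\cap E(T_j)=\emptyset$ and $V(T_i)\cap V(T_j)=S$ for all $i\ne j$. For a connected graph $G$ of order $n$ and integers $k,\ell$ with $2\le k\le n$ and $1\le \ell\le \kappa_k(G)$ (where $\kappa_k(G)$ is the minimum, over all $k$-subsets $S$ of $V(G)$, of the maximum number of internally disjoint $S$-trees), the $(k,\ell)$-proper index $px_{k,\ell}(G)$ is the minimum number of colors in an edge-coloring of $G$ such that for every $k$-subset $S$ of $V(G)$ there exist $\ell$ internally disjoint proper $S$-trees. *)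

(* The complete graph K_n has vertex set 'I_n and edge set
   all 2-element subsets of 'I_n. Edges are represented as {set 'I_n}. *)
From mathcomp Require Import all_boot all_order all_algebra.
Set Implicit Arguments. Unset Strict Implicit. Unset Printing Implicit Defensive.

Section Defs.
Variable n : nat.
Notation V := 'I_n.

Definition is_edge (e : {set V}) : bool := #|e| == 2.

Definition subgraph_ok (VT : {set V}) (ET : {set {set V}}) : bool :=
  [forall e in ET, is_edge e && (e \subset VT)].

Definition adj (ET : {set {set V}}) : rel V :=
  fun x y => (x != y) && ([set x; y] \in ET).

Definition sg_connected (VT : {set V}) (ET : {set {set V}}) : Prop :=
  forall x y, x \in VT -> y \in VT -> connect (adj ET) x y.

Definition sg_acyclic (VT : {set V}) (ET : {set {set V}}) : Prop :=
  forall s : seq V, uniq s -> 3 <= size s -> all (mem VT) s ->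
    ~~ cycle (adj ET) s.

Definition is_tree (VT : {set V}) (ET : {set {set V}}) : Prop :=
  [/\ VT != set0, subgraph_ok VT ET, sg_connected VT ET & sg_acyclic VT ET].

Definition proper_tree (c : nat) (col : {set V} -> 'I_c)
    (VT : {set V}) (ET : {set {set V}}) : Prop :=
  is_tree VT ET /\
  forall e1 e2, e1 \in ET -> e2 \in ET -> e1 != e2 ->
    e1 :&: e2 != set0 -> col e1 != col e2.

Definition S_tree (S VT : {set V}) (ET : {set {set V}}) : Prop :=
  is_tree VT ET /\ S \subset VT.

Definition kl_proper_coloring (k l c : nat) (col : {set V} -> 'I_c) : Prop :=
  forall S : {set V}, #|S| = k ->
    exists T : 'I_l -> {set V} * {set {set V}},
      (forall i, S_tree S (T i).1 (T i).2 /\ proper_tree col (T i).1 (T i).2) /\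
      (forall i j, i != j ->
         (T i).2 :&: (T j).2 = set0 /\ (T i).1 :&: (T j).1 = S).

Definition kl_colorable (k l c : nat) : Prop :=
  exists col : {set V} -> 'I_c, kl_proper_coloring k l col.

Definition px_complete_eq (k l c : nat) : Prop :=
  kl_colorable k l c /\ forall c', kl_colorable k l c' -> c <= c'.

End Defs.

(* Colour the edge xy of K_n by the parity of x + y. A path w_0 w_1 ... w_L is
   then properly coloured exactly when odd w_t != odd w_(t+2), i.e. when its
   parities follow the 4-periodic pattern 0,0,1,1. Given S = {s_0, ..., s_(k-1)},
   the j-th S-tree (j < l) is a path on the positions t < 4k: position
   4i + 2 odd(s_i) carries s_i, and every other position t carries a vertex
   outside S of parity odd(t/2) reserved for the pair (j, t). Such reserved
   vertices exist as soon as n/2 >= 4kl + k, which the hypothesis implies.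
   Two of these paths share exactly S, and since S-positions are even every
   edge has a reserved endpoint, so the paths are internally disjoint. One
   colour never suffices: a properly one-coloured tree has maximum degree one,
   hence at most two vertices, while it must contain k >= 3 of them. *)

From mathcomp Require Import all_boot all_order all_algebra.
From mathcomp Require Import zify ring lra.
Set Implicit Arguments. Unset Strict Implicit. Unset Printing Implicit Defensive.

Lemma uniq_cycle_neighbours (T : eqType) (e : rel T) (p : seq T) x :
  uniq p -> 2 < size p -> cycle e p -> x \in p ->
  exists y z, [/\ y != z, y \in p, z \in p, e x y & e z x].
Proof.
move=> + + + /rot_to[i q Hrot]; rewrite -(rot_uniq i) -(size_rot i) -(rot_cycle i).
have memq z : z \in x :: q -> z \in p by rewrite -Hrot mem_rot.
rewrite Hrot; case: q memq {Hrot} => [|a [|b v]] // memq.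
move=> /and3P[_ aNbv _] _; rewrite /= rcons_path => /and3P[exa _ /andP[_ elx]].
have lbv : last b v \in b :: v by exact: mem_last.
exists a, (last b v); split=> //.
- by apply: contraNneq aNbv => ->.
- by rewrite memq // !inE eqxx orbT.
- by apply: memq; rewrite 2!in_cons lbv !orbT.
Qed.

Section PathTrees.
Variable n : nat.
Notation V := 'I_n.

Definition path_verts (g : nat -> V) (L : nat) : {set V} := [set g i | i : 'I_L.+1].
Definition path_edges (g : nat -> V) (L : nat) : {set {set V}} :=
  [set [set g i; g i.+1] | i : 'I_L].

Lemma adj_sym (ET : {set {set V}}) : symmetric (adj ET).
Proof. by move=> x y; rewrite /adj eq_sym setUC. Qed.

Variables (g : nat -> V) (L : nat).
Hypothesis g_inj : forall i j, i <= L -> j <= L -> g i = g j -> i = j.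

Lemma eq_path_vert i j : i <= L -> j <= L -> (g i == g j) = (i == j).
Proof. by move=> iL jL; apply/eqP/eqP => [|->] //; apply: g_inj. Qed.

Lemma path_vertsP x : reflect (exists2 i, i <= L & x = g i) (x \in path_verts g L).
Proof.
apply: (iffP imsetP) => [[i _ ->]|[i iL ->]]; first by exists i; rewrite // -ltnS.
by exists (Ordinal (iL : i < L.+1)).
Qed.

Lemma path_edgesP e :
  reflect (exists2 i, i < L & e = [set g i; g i.+1]) (e \in path_edges g L).
Proof.
apply: (iffP imsetP) => [[i _ ->]|[i iL ->]]; first by exists i.
by exists (Ordinal iL).
Qed.

Lemma path_edge_sub e : e \in path_edges g L -> e \subset path_verts g L.
Proof.
case/path_edgesP=> i iL ->; apply/subsetP => x; rewrite !inE => /orP[]/eqP->.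
  by apply/path_vertsP; exists i => //; exact: ltnW.
by apply/path_vertsP; exists i.+1.
Qed.

Lemma path_adj i j : i <= L -> j <= L ->
  adj (path_edges g L) (g i) (g j) = (i.+1 == j) || (j.+1 == i).
Proof.
move=> iL jL; rewrite /adj eq_path_vert //; apply/andP/idP => [[ij /path_edgesP[m mL E]]|].
  have gi : g i \in [set g m; g m.+1] by rewrite -E set21.
  have gj : g j \in [set g m; g m.+1] by rewrite -E set22.
  by move: gi gj ij; rewrite !inE !eq_path_vert ?(ltnW mL) //; lia.
case/orP=> /eqP E; subst; split; rewrite ?neq_ltn ?leqnn ?orbT //; apply/path_edgesP.
- by exists i.
- by exists j; rewrite // setUC.
Qed.

Lemma path_connected : sg_connected (path_verts g L) (path_edges g L).
Proof.
have from0 i : i <= L -> connect (adj (path_edges g L)) (g 0) (g i).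
  elim: i => [|i IH] iL; first exact: connect0.
  apply: connect_trans (IH (ltnW iL)) (connect1 _).
  by rewrite path_adj ?eqxx // ltnW.
move=> _ _ /path_vertsP[i iL ->] /path_vertsP[j jL ->].
apply: connect_trans (from0 j jL).
by rewrite (sym_connect_sym (@adj_sym _)) from0.
Qed.

(* In a cycle, the vertex of largest path index would have two distinct
   neighbours, both of index one less. *)
Lemma path_acyclic : sg_acyclic (path_verts g L) (path_edges g L).
Proof.
move=> p Up p_size /allP pV; apply/negP => p_cycle.
have [x0 x0p] : exists x, x \in p.
  by case: p p_size {Up pV p_cycle} => [|x p] //; exists x; exact: mem_head.
have [i0 i0L def_x0] := path_vertsP _ (pV _ x0p).
pose P := fun i : 'I_L.+1 => g i \in p.
have Pi0 : P (Ordinal (i0L : i0 < L.+1)) by rewrite /P /= -def_x0.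
case: (arg_maxnP (fun i : 'I_L.+1 => val i) Pi0) => m mp m_max.
have mL : m <= L := ltn_ord m.
have below x : x \in p -> exists2 a, a <= m & x = g a.
  move=> xp; have [a aL def_x] := path_vertsP _ (pV _ xp).
  exists a => //; apply: (m_max (Ordinal (aL : a < L.+1))).
  by rewrite /P /= -def_x.
have [y [z [yz yp zp my zm]]] := uniq_cycle_neighbours Up p_size p_cycle mp.
have [a am def_y] := below y yp; have [b bm def_z] := below z zp.
move: my zm yz; rewrite def_y def_z !path_adj ?(leq_trans am) ?(leq_trans bm) //.
by rewrite eq_path_vert ?(leq_trans am) ?(leq_trans bm) //; lia.
Qed.

Lemma path_is_tree : is_tree (path_verts g L) (path_edges g L).
Proof.
split; [|apply/forall_inP => e eE | exact: path_connected | exact: path_acyclic].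
  by apply/set0Pn; exists (g 0); apply/path_vertsP; exists 0.
rewrite path_edge_sub // andbT; case/path_edgesP: eE => i iL ->.
by rewrite /is_edge cards2 eq_path_vert ?(ltnW iL) // (ltn_eqF (ltnSn i)).
Qed.

Lemma path_proper_tree c (col : {set V} -> 'I_c) :
  (forall i, i.+1 < L -> col [set g i; g i.+1] != col [set g i.+1; g i.+2]) ->
  proper_tree col (path_verts g L) (path_edges g L).
Proof.
move=> col_alt; split; first exact: path_is_tree.
move=> _ _ /path_edgesP[i iL ->] /path_edgesP[j jL ->] ne /set0Pn[x].
rewrite !inE => /andP[xi xj].
have {}ne : i != j by apply: contraNneq ne => ->.
have : (i.+1 == j) || (j.+1 == i).
  by move: xi xj ne => /orP[]/eqP->; rewrite !eq_path_vert ?(ltnW iL) ?(ltnW jL) //; lia.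
by case/orP=> /eqP E; subst; [exact: col_alt | rewrite eq_sym; exact: col_alt].
Qed.

End PathTrees.

Definition parity_coloring n (e : {set 'I_n}) : 'I_2 := inord (odd (\sum_(x in e) x)).

Lemma parity_coloring_pair n (x y : 'I_n) :
  x != y -> parity_coloring [set x; y] = odd x (+) odd y :> nat.
Proof.
move=> xy; rewrite /parity_coloring big_setU1 ?inE // big_set1 inordK ?oddD //.
exact: leq_b1.
Qed.

Lemma parity_path_proper_tree n (g : nat -> 'I_n) L :
  (forall i j, i <= L -> j <= L -> g i = g j -> i = j) ->
  (forall i, i.+1 < L -> odd (g i) != odd (g i.+2)) ->
  proper_tree (@parity_coloring n) (path_verts g L) (path_edges g L).
Proof.
move=> g_inj g_alt; apply: path_proper_tree => // i iL.
have neq a b : a < b <= L -> g a != g b.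
  move=> /andP[ab bL].
  by rewrite (eq_path_vert g_inj) ?(ltn_eqF ab) // (leq_trans (ltnW ab)).
apply: contra (g_alt i iL) => /eqP/(congr1 (@nat_of_ord 2)).
rewrite !parity_coloring_pair ?neq ?leqnn ?(ltnW iL) ?ltnS ?leqnSn //.
by case: odd; case: odd; case: odd.
Qed.

Section OneColour.
Variable n : nat.
Notation V := 'I_n.

Lemma card_proper_tree_one_colour (col : {set V} -> 'I_1) VT ET :
  proper_tree col VT ET -> #|VT| <= 2.
Proof.
case=> [[/set0Pn[a aV] _ VT_conn _] col_ok].
have nbr_uniq x y z : adj ET x y -> adj ET x z -> y = z.
  move=> /andP[xy xyE] /andP[_ xzE]; apply/eqP/negPn/negP => yz.
  have : col [set x; y] != col [set x; z].
    apply: col_ok => //; last by apply/set0Pn; exists x; rewrite !inE eqxx.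
    apply: contra_neq yz => E; have : y \in [set x; z] by rewrite -E set22.
    by rewrite !inE eq_sym (negbTE xy) => /eqP.
  by rewrite !ord1 eqxx.
pose Q := [pred z | (z == a) || adj ET a z].
have Q_closed : closed (adj ET) Q.
  apply: (intro_closed (sym_connect_sym (@adj_sym n ET))).
  move=> x y xy; rewrite !inE => /orP[/eqP<-|ax]; first by rewrite xy orbT.
  by rewrite (nbr_uniq x y a xy) ?eqxx // adj_sym.
have near_a y : y \in VT :\ a -> adj ET a y.
  rewrite !inE => /andP[ya yV].
  have := closed_connect Q_closed (VT_conn a y aV yV).
  by rewrite !inE eqxx (negbTE ya) => /esym.
rewrite (cardsD1 a) aV add1n ltnS; apply/card_le1_eqP => y z yV zV.
exact: nbr_uniq (near_a z zV) (near_a y yV).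
Qed.

Lemma kl_colorable_ge2 k l c : 3 <= k <= n -> 0 < l -> kl_colorable n k l c -> 1 < c.
Proof.
move=> /andP[k3 kn] l0 [col col_ok].
case: c col col_ok => [|[|//]] col col_ok; first by case: (col set0).
have [s [Us s_size _]] : exists s, [/\ uniq s, size s = k & {subset s <= [set: V]}].
  by apply/card_geqP; rewrite cardsT card_ord.
have S_card : #|[set x in s]| = k by rewrite cardsE (card_uniqP Us).
have [T [T_ok _]] := col_ok _ S_card.
have [[_ S_sub] T_proper] := T_ok (Ordinal l0).
have := leq_trans (subset_leq_card S_sub) (card_proper_tree_one_colour T_proper).
by rewrite S_card; lia.
Qed.

End OneColour.

Lemma count_parity_iota_double b m : count (fun i => odd i == b) (iota 0 m.*2) = m.
Proof.
elim: m => // m IH.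
rewrite doubleS -addn2 iotaD count_cat IH /= odd_double.
by case: b {IH}; rewrite ?addn0 ?addn1.
Qed.

Lemma parity_class_card n (b : bool) : n./2 <= #|[set x : 'I_n | odd x == b]|.
Proof.
have -> : #|[set x : 'I_n | odd x == b]| = count (fun i => odd i == b) (iota 0 n).
  rewrite cardsE cardE /enum_mem size_filter -enumT -val_enum_ord count_map.
  by apply: eq_count => x; rewrite !inE.
by rewrite -{2}(odd_double_half n) addnC iotaD count_cat count_parity_iota_double leq_addr.
Qed.

Lemma fresh_supply n (S : {set 'I_n}) m : 0 < m -> m + #|S| <= n./2 ->
  exists f : bool -> nat -> 'I_n,
    (forall b i, i < m -> odd (f b i) = b /\ f b i \notin S) /\
    (forall b b' i i', i < m -> i' < m -> f b i = f b' i' -> i = i').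
Proof.
move=> m0 mS.
pose pool b := [set x : 'I_n | odd x == b] :\: S.
have pool_big b : m <= size (enum (pool b)).
  have S_meet : #|[set x : 'I_n | odd x == b] :&: S| <= #|S|.
    exact/subset_leq_card/subsetIr.
  rewrite -cardE cardsD; apply: leq_trans (leq_sub (parity_class_card n b) S_meet).
  by move: mS; lia.
have n0 : 0 < n by move: mS; rewrite -divn2; lia.
pose x0 := Ordinal n0.
have pool_nth b i : i < m ->
    odd (nth x0 (enum (pool b)) i) = b /\ nth x0 (enum (pool b)) i \notin S.
  move=> im; have := mem_nth x0 (leq_trans im (pool_big b)).
  by rewrite mem_enum !inE => /andP[-> /eqP].
exists (fun b i => nth x0 (enum (pool b)) i); split=> // b b' i i' im i'm E.
have bb : b = b' by rewrite -(pool_nth b i im).1 -(pool_nth b' i' i'm).1 E.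
move: E; rewrite -bb => /eqP; rewrite nth_uniq ?enum_uniq ?(leq_trans _ (pool_big b)) //.
by move/eqP.
Qed.

Lemma odd_half_of_mod4 t (b : bool) : t %% 4 = b.*2 -> odd t./2 = b.
Proof.
move=> tb; rewrite (divn_eq t 4) tb.
have -> : t %/ 4 * 4 + b.*2 = (t %/ 4 * 2 + b).*2 by rewrite doubleD -!muln2 -mulnA.
by rewrite half_double oddD oddM andbF; case: b {tb}.
Qed.

Section Construction.
Variables (n k l : nat) (S : {set 'I_n}) (s : nat -> 'I_n) (fresh : nat -> nat -> 'I_n).
Hypothesis k_gt0 : 0 < k.
Hypothesis s_inj : forall i j, i < k -> j < k -> s i = s j -> i = j.
Hypothesis s_in : forall i, i < k -> s i \in S.
Hypothesis s_onto : forall x, x \in S -> exists2 i, i < k & x = s i.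
Hypothesis fresh_odd : forall j t, j < l -> t < 4 * k -> odd (fresh j t) = odd t./2.
Hypothesis fresh_notin : forall j t, j < l -> t < 4 * k -> fresh j t \notin S.
Hypothesis fresh_inj : forall j j' t t', j < l -> j' < l -> t < 4 * k -> t' < 4 * k ->
  fresh j t = fresh j' t' -> j = j' /\ t = t'.

Definition S_slot t := t %% 4 == (odd (s (t %/ 4))).*2.

Definition tree_vertex j t := if S_slot t then s (t %/ 4) else fresh j t.

Local Notation last_pos := (4 * k).-1.

Lemma S_slot_even t : S_slot t -> ~~ odd t.
Proof. by move=> /eqP tb; rewrite -(odd_mod t (erefl : odd 4 = false)) tb odd_double. Qed.

Lemma mem_S_tree_vertex j t : j < l -> t < 4 * k -> (tree_vertex j t \in S) = S_slot t.
Proof.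
move=> jl tk; rewrite /tree_vertex; case: ifP => slot; last exact: negbTE (fresh_notin jl tk).
by rewrite s_in //; lia.
Qed.

Lemma odd_tree_vertex j t : j < l -> t < 4 * k -> odd (tree_vertex j t) = odd t./2.
Proof.
move=> jl tk; rewrite /tree_vertex; case: ifP => slot; last exact: fresh_odd.
by rewrite (odd_half_of_mod4 (eqP slot)).
Qed.

Lemma tree_vertex_inj j t t' : j < l -> t <= last_pos -> t' <= last_pos ->
  tree_vertex j t = tree_vertex j t' -> t = t'.
Proof.
move=> jl tL t'L E.
have tk : t < 4 * k by lia.
have t'k : t' < 4 * k by lia.
have slots : S_slot t = S_slot t' by rewrite -!(mem_S_tree_vertex jl) // E.
move: E; rewrite /tree_vertex -slots; case: ifP => slot; last by case/fresh_inj.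
have slot' : S_slot t' by rewrite -slots.
move/s_inj => q; have {}q : t %/ 4 = t' %/ 4 by apply: q; lia.
by rewrite (divn_eq t 4) (divn_eq t' 4) (eqP slot) (eqP slot') q.
Qed.

Lemma S_sub_tree j : S \subset path_verts (tree_vertex j) last_pos.
Proof.
apply/subsetP => _ /s_onto[i ik ->]; apply/path_vertsP.
set b := odd (s i); exists (4 * i + b.*2); first by case: b; lia.
have ti : (4 * i + b.*2) %/ 4 = i by case: b; lia.
have tm : (4 * i + b.*2) %% 4 = b.*2 by case: b {ti}; lia.
by rewrite /tree_vertex /S_slot ti tm eqxx.
Qed.

Lemma shared_tree_vertex j j' x : j < l -> j' < l -> j != j' ->
  x \in path_verts (tree_vertex j) last_pos -> x \in path_verts (tree_vertex j') last_pos ->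
  x \in S.
Proof.
move=> jl j'l jj' /path_vertsP[t tL ->] /path_vertsP[t' t'L E].
have tk : t < 4 * k by lia.
have t'k : t' < 4 * k by lia.
rewrite mem_S_tree_vertex //; apply: contraNT jj' => slot.
have slot' : ~~ S_slot t' by rewrite -(mem_S_tree_vertex j'l t'k) -E mem_S_tree_vertex.
by move: E; rewrite /tree_vertex (negbTE slot) (negbTE slot') => /fresh_inj[] // ->.
Qed.

Lemma tree_edge_outside_S j e : j < l ->
  e \in path_edges (tree_vertex j) last_pos -> exists2 x, x \in e & x \notin S.
Proof.
move=> jl /path_edgesP[t tL ->].
have tk : t.+1 < 4 * k by lia.
case: (boolP (S_slot t)) => slot.
  exists (tree_vertex j t.+1); first by rewrite set22.
  rewrite mem_S_tree_vertex //; apply/negP => /S_slot_even /=; rewrite negbK.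
  exact/negP/S_slot_even.
by exists (tree_vertex j t); rewrite ?set21 // mem_S_tree_vertex // ltnW.
Qed.

Lemma parity_coloring_S_trees :
  exists T : 'I_l -> {set 'I_n} * {set {set 'I_n}},
    (forall j, S_tree S (T j).1 (T j).2 /\ proper_tree (@parity_coloring n) (T j).1 (T j).2) /\
    (forall j j', j != j' -> (T j).2 :&: (T j').2 = set0 /\ (T j).1 :&: (T j').1 = S).
Proof.
exists (fun j => (path_verts (tree_vertex j) last_pos, path_edges (tree_vertex j) last_pos)).
split=> [j|j j' jj'] /=.
  have inj t t' := @tree_vertex_inj j t t' (ltn_ord j).
  split; first by split; [exact: path_is_tree | exact: S_sub_tree].
  apply: parity_path_proper_tree => // t tL.
  by rewrite !odd_tree_vertex //= ?negbK; [case: odd | lia..].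
have shared x := @shared_tree_vertex j j' x (ltn_ord j) (ltn_ord j') jj'.
split; apply/setP.
  move=> e; rewrite !inE; apply/negbTE/andP => -[ej ej'].
  have [x xe] := tree_edge_outside_S (ltn_ord j) ej; apply/negP; rewrite negbK.
  by apply: shared; apply: (subsetP (path_edge_sub _)) xe.
move=> x; rewrite inE; apply/andP/idP => [[]|xS]; first exact: shared.
by split; apply: (subsetP (S_sub_tree _)).
Qed.

End Construction.

Lemma euclid_division_uniq q q' r r' d : r < d -> r' < d ->
  q * d + r = q' * d + r' -> q = q' /\ r = r'.
Proof.
move=> rd r'd E; have d0 : 0 < d by apply: leq_ltn_trans rd.
have qq : q = q' by have := congr1 (divn^~ d) E; rewrite /= !divnMDl // !divn_small // !addn0.
by split=> //; move: E; rewrite qq => /addnI.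
Qed.

Lemma kl_colorable_parity n k l : 0 < k -> 0 < l -> 4 * k * l + k <= n./2 ->
  kl_colorable n k l 2.
Proof.
move=> k0 l0 big; exists (@parity_coloring n) => S S_card.
have idx_lt j t : j < l -> t < 4 * k -> j * (4 * k) + t < l * (4 * k) by nia.
have room : l * (4 * k) + #|S| <= n./2 by rewrite S_card; nia.
have m0 : 0 < l * (4 * k) by rewrite !muln_gt0 l0 k0.
have [f [f_ok f_inj]] := fresh_supply m0 room.
pose x0 := f false 0; pose s i := nth x0 (enum S) i.
have size_S : size (enum S) = k by rewrite -cardE.
apply: (@parity_coloring_S_trees n k l S s (fun j t => f (odd t./2) (j * (4 * k) + t))) => //.
- by move=> i i' ik i'k /eqP; rewrite nth_uniq ?enum_uniq ?size_S // => /eqP.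
- by move=> i ik; rewrite -mem_enum mem_nth ?size_S.
- move=> x xS; exists (index x (enum S)); last by rewrite /s nth_index ?mem_enum.
  by rewrite -size_S index_mem mem_enum.
- by move=> j t jl tk; rewrite (f_ok _ _ (idx_lt j t jl tk)).1.
- by move=> j t jl tk; rewrite (f_ok _ _ (idx_lt j t jl tk)).2.
- move=> j j' t t' jl j'l tk t'k /f_inj E.
  exact: euclid_division_uniq tk t'k (E (idx_lt j t jl tk) (idx_lt j' t' j'l t'k)).
Qed.

Import Order.TTheory GRing.Theory Num.Theory.

Lemma threshold_bound k l n : 3 <= k ->
  (2%:R * (((l%:R * (k%:R - 1) + k%:R) ^+ 4 - 1) / ((l%:R + 1) * (k%:R - 1)))
     - 1 <= (n%:R : rat))%R ->
  4 * k * l + k <= n./2.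
Proof.
(* With M := l (k-1) + k one has M - 1 = (l+1)(k-1), so the quotient in the
   hypothesis is M^3 + M^2 + M + 1. *)
case: k => // k k3 bound; pose M := l * k + k.+1.
have M_bound : 2 * (M ^ 3 + M ^ 2 + M + 1) <= n.+1.
  rewrite -(ler_nat rat); move: bound; rewrite -[(k.+1%:R)%R]natr1 addrK.
  set x := (l%:R : rat); set y := (k%:R : rat).
  have y0 : (0 < y)%R by rewrite ltr0n; lia.
  have x0 : (0 <= x)%R by rewrite ler0n.
  have xy0 : ((x + 1) * y != 0)%R by apply: mulf_neq0; rewrite gt_eqF //; lra.
  pose N := (x * y + y + 1)%R.
  rewrite (_ : ((x * y + (y + 1)) ^+ 4 - 1 = (N ^+ 3 + N ^+ 2 + N + 1) * ((x + 1) * y))%R);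
    last by rewrite /N; ring.
  have -> : ((2 * (M ^ 3 + M ^ 2 + M + 1))%:R = 2 * (N ^+ 3 + N ^+ 2 + N + 1) :> rat)%R.
    by rewrite /M /N /x /y !(natrD, natrM, natrX) -[(k.+1%:R)%R]natr1; ring.
  rewrite mulfK // -[(n.+1%:R)%R]natr1; lra.
have M_sq : 4 * k.+1 * l + k.+1 <= M ^ 2 + M by rewrite /M; nia.
by move: M_bound; rewrite -divn2; lia.
Qed.

Theorem theorem2p9 (k l n : nat) :
  3 <= k -> 1 <= l ->
  (2%:R * (((l%:R * (k%:R - 1) + k%:R) ^+ 4 - 1) / ((l%:R + 1) * (k%:R - 1)))
     - 1 <= (n%:R : rat))%R ->
  px_complete_eq n k l 2.
Proof.
move=> k3 l1 bound; have big := threshold_bound k3 bound.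
have kn : k <= n by move: big; rewrite -divn2; lia.
split; first by apply: kl_colorable_parity => //; lia.
by move=> c; apply: kl_colorable_ge2; rewrite ?k3.
Qed.
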